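(* Let $H$ be a real Hilbert space and let $T\in K(H)$ be a non-zero compact operator. Then the following are equivalent: (i) $T$ is $\varepsilon$-smooth for some $\varepsilon\in[0,2)$; (ii) $M_T=\{\pm x_0\}$ for some $x_0\in S_H$; (iii) $T$ is smooth.
   Context: Smoothness notions for $T$ refer to $T$ as an element of the space $L(H)$ of bounded linear operators on $H$ with the operator norm. For a normed space $Z$ and $z\in Z\setminus\{\theta\}$, $J(z)=\{\phi\in S_{Z^*}:\phi(z)=\|z\|\}$; $z$ is smooth if $J(z)$ is a singleton and $\varepsilon$-smooth if $\operatorname{diam}J(z)=\sup_{\phi,\psi\in J(z)}\|\phi-\psi\|\le\varepsilon$. $M_T=\{x\in S_H:\|Tx\|=\|T\|\}$ is the norm attainment set of $T$. *)

From HB Require Import structures.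
From mathcomp Require Import all_boot all_order all_algebra.
From mathcomp Require Import all_classical all_reals all_analysis.
Set Implicit Arguments. Unset Strict Implicit. Unset Printing Implicit Defensive.
Import Order.TTheory GRing.Theory Num.Theory.
Import numFieldNormedType.Exports.
Local Open Scope classical_set_scope.
Local Open Scope ring_scope.

Section Defs.
Variables (R : realType) (H : completeNormedModType R).

(* ip is an inner product inducing the norm of H; together with completeness
   this makes H a real Hilbert space. *)
Definition is_inner_product (ip : H -> H -> R) : Prop :=
  [/\ forall x y, ip x y = ip y x,
      forall a x y z, ip (a *: x + y) z = a * ip x z + ip y z &
      forall x, ip x x = `|x| ^+ 2].

Definition bounded_linear (A : H -> H) : Prop :=
  (forall a x y, A (a *: x + y) = a *: A x + A y) /\
  exists C : R, forall x, `|A x| <= C * `|x|.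

Definition opnorm (A : H -> H) : R :=
  sup [set `|A x| | x in [set x : H | `|x| <= 1]].

Definition compact_operator (A : H -> H) : Prop :=
  bounded_linear A /\ compact (closure (A @` [set x : H | `|x| <= 1])).

(* Elements of the dual L(H)^*: bounded linear functionals on L(H)
   (functionals are represented as maps on H -> H; only their values on L(H)
   matter). *)
Definition dual_elt (phi : (H -> H) -> R) : Prop :=
  (forall a (A B : H -> H), bounded_linear A -> bounded_linear B ->
      phi (fun x => a *: A x + B x) = a * phi A + phi B) /\
  exists C : R, forall A, bounded_linear A -> `|phi A| <= C * opnorm A.

Definition dnorm (phi : (H -> H) -> R) : R :=
  sup [set `|phi A| | A in [set A | bounded_linear A /\ opnorm A <= 1]].

Definition Jset (T : H -> H) : set ((H -> H) -> R) :=
  [set phi | dual_elt phi /\ dnorm phi = 1 /\ phi T = opnorm T].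

Definition dual_eq (phi psi : (H -> H) -> R) : Prop :=
  forall A, bounded_linear A -> phi A = psi A.

Definition smooth (T : H -> H) : Prop :=
  exists phi, Jset T phi /\ forall psi, Jset T psi -> dual_eq psi phi.

Definition eps_smooth (eps : R) (T : H -> H) : Prop :=
  forall phi psi, Jset T phi -> Jset T psi ->
    dnorm (fun A => phi A - psi A) <= eps.

Definition MT (T : H -> H) : set H :=
  [set x | `|x| = 1 /\ `|T x| = opnorm T].

End Defs.

(* Write N = ||T|| and phi_x(A) = <Ax, Tx> / N.  For every x in M_T, phi_x lies in
   J(T); and M_T is nonempty because T is compact: vectors almost attaining N have
   images clustering at some point, and by the parallelogram law such vectors are
   themselves Cauchy.
   Moreover, for x in M_T one has <Tx, Tw> = N^2 <x, w>, so any unit vector in the span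
   of two elements of M_T is again in M_T.  If M_T is not {x0, -x0}, it therefore
   contains orthonormal x, u, and the norm-one operator v |-> <v,x> Tx/N - <v,u> Tu/N
   takes the value 1 under phi_x and -1 under phi_u, so diam J(T) >= 2.
   If M_T = {x0, -x0}, vectors almost attaining N are close to +-x0, which gives
   ||T + tA|| <= N + t (phi_x0(A) + g) for small t > 0.  Since any psi in J(T)
   satisfies N + t psi(A) = psi(T + tA) <= ||T + tA||, we get psi <= phi_x0, hence
   psi = phi_x0 by linearity. *)

From HB Require Import structures.
From mathcomp Require Import all_boot all_order all_algebra.
From mathcomp Require Import all_classical all_reals all_analysis.
From mathcomp Require Import ring lra.
Import Order.TTheory GRing.Theory Num.Theory.
Import numFieldNormedType.Exports.
Local Open Scope classical_set_scope.
Local Open Scope ring_scope.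
Set Implicit Arguments. Unset Strict Implicit. Unset Printing Implicit Defensive.

Section InnerProduct.
Variables (R : realType) (H : completeNormedModType R).
Variables (ip : H -> H -> R) (Hip : is_inner_product ip).
Implicit Types (x y z v : H) (a b : R).

Lemma ipC x y : ip x y = ip y x.
Proof. by case: Hip. Qed.

Lemma ipxx x : ip x x = `|x| ^+ 2.
Proof. by case: Hip. Qed.

Lemma ipDl x y z : ip (x + y) z = ip x z + ip y z.
Proof. by case: Hip => _ L _; have := L 1 x y z; rewrite scale1r mul1r. Qed.

Lemma ip0l z : ip 0 z = 0.
Proof. by apply: (@addrI _ (ip 0 z)); rewrite -ipDl !addr0. Qed.

Lemma ipZl a x z : ip (a *: x) z = a * ip x z.
Proof. by case: Hip => _ L _; have := L a x 0 z; rewrite addr0 ip0l addr0. Qed.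

Lemma ipNl x z : ip (- x) z = - ip x z.
Proof. by rewrite -scaleN1r ipZl mulN1r. Qed.

Lemma ipBl x y z : ip (x - y) z = ip x z - ip y z.
Proof. by rewrite ipDl ipNl. Qed.

Lemma ipDr x y z : ip z (x + y) = ip z x + ip z y.
Proof. by rewrite ipC ipDl ![ip _ z]ipC. Qed.

Lemma ipZr a x z : ip z (a *: x) = a * ip z x.
Proof. by rewrite ipC ipZl ipC. Qed.

Lemma ipNr x z : ip z (- x) = - ip z x.
Proof. by rewrite ipC ipNl ipC. Qed.

Lemma ipBr x y z : ip z (x - y) = ip z x - ip z y.
Proof. by rewrite ipDr ipNr. Qed.

Lemma sqr_normDZ a b x y :
  `|a *: x + b *: y| ^+ 2 = a ^+ 2 * `|x| ^+ 2 + 2 * a * b * ip x y + b ^+ 2 * `|y| ^+ 2.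
Proof. by rewrite -[LHS]ipxx ipDl !ipDr !ipZl !ipZr !ipxx (ipC y x); ring. Qed.

Lemma sqr_normD1Z b x y :
  `|x + b *: y| ^+ 2 = `|x| ^+ 2 + 2 * b * ip x y + b ^+ 2 * `|y| ^+ 2.
Proof. by have := sqr_normDZ 1 b x y; rewrite scale1r => ->; ring. Qed.

Lemma cauchy_schwarz x y : `|ip x y| <= `|x| * `|y|.
Proof.
have [->|y0] := eqVneq y 0; first by rewrite ipC ip0l !normr0 mulr0.
have ny : 0 < `|y| ^+ 2 by rewrite exprn_gt0 // normr_gt0.
set s := ip x y / `|y| ^+ 2.
have sy : s * `|y| ^+ 2 = ip x y by rewrite /s mulfVK ?gt_eqF.
have := sqr_ge0 `|x + (- s) *: y|; rewrite sqr_normD1Z => h.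
have ineq : ip x y ^+ 2 <= (`|x| * `|y|) ^+ 2.
  have h' : 0 <= `|y| ^+ 2 * (`|x| ^+ 2 - s * ip x y) by apply: mulr_ge0; nra.
  rewrite exprMn; nra.
by rewrite -ler_sqr ?nnegrE ?mulr_ge0 // real_normK ?num_real.
Qed.

Lemma parallelogram x y : `|x - y| ^+ 2 + `|x + y| ^+ 2 = 2 * `|x| ^+ 2 + 2 * `|y| ^+ 2.
Proof.
have := sqr_normD1Z (-1) x y; have := sqr_normD1Z 1 x y.
by rewrite scaleN1r scale1r => -> ->; ring.
Qed.

Section Orthonormal.
Variables (e1 e2 : H).
Hypotheses (e11 : ip e1 e1 = 1) (e22 : ip e2 e2 = 1) (e12 : ip e1 e2 = 0).

Lemma sqr_norm_orthonormal a b : `|a *: e1 + b *: e2| ^+ 2 = a ^+ 2 + b ^+ 2.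
Proof. by rewrite sqr_normDZ e12 -!ipxx e11 e22; ring. Qed.

Lemma bessel v : ip v e1 ^+ 2 + ip v e2 ^+ 2 <= `|v| ^+ 2.
Proof.
have h := sqr_ge0 `|v - (ip v e1 *: e1 + ip v e2 *: e2)|.
rewrite -ipxx !(ipBl, ipBr, ipDl, ipDr, ipZl, ipZr) e11 e22 e12 (ipC e2 e1) e12 in h.
by rewrite (ipC e1 v) (ipC e2 v) in h; rewrite -ipxx; nra.
Qed.

End Orthonormal.

End InnerProduct.

Section BoundedLinear.
Variables (R : realType) (H : completeNormedModType R).
Implicit Types (A B : H -> H) (x y : H).

Section Linear.
Variables (A : H -> H) (bA : bounded_linear A).

Lemma linD x y : A (x + y) = A x + A y.
Proof. by have := (proj1 bA) 1 x y; rewrite !scale1r. Qed.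

Lemma lin0 : A 0 = 0.
Proof. by apply: (@addrI _ (A 0)); rewrite -linD !addr0. Qed.

Lemma linZ a x : A (a *: x) = a *: A x.
Proof. by have := (proj1 bA) a x 0; rewrite lin0 !addr0. Qed.

Lemma linN x : A (- x) = - A x.
Proof. by rewrite -scaleN1r linZ scaleN1r. Qed.

Lemma linB x y : A (x - y) = A x - A y.
Proof. by rewrite linD linN. Qed.

End Linear.

Lemma bounded_linear_comb a A B : bounded_linear A -> bounded_linear B ->
  bounded_linear (fun x => a *: A x + B x).
Proof.
move=> [LA [C hC]] [LB [D hD]]; split.
  by move=> c x y; rewrite LA LB !scalerDr !scalerA (mulrC a c) addrACA.
exists (`|a| * `|C| + `|D|) => x.
rewrite (le_trans (ler_normD _ _)) // normrZ mulrDl -mulrA.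
apply: lerD; last by apply: le_trans (hD x) _; rewrite ler_wpM2r // ler_norm.
by rewrite ler_wpM2l //; apply: le_trans (hC x) _; rewrite ler_wpM2r // ler_norm.
Qed.

Lemma bounded_linear0 : bounded_linear (fun _ : H => 0).
Proof.
split; first by move=> *; rewrite scaler0 addr0.
by exists 0 => x; rewrite normr0 mul0r.
Qed.

Lemma bounded_linearZ a A : bounded_linear A -> bounded_linear (fun x => a *: A x).
Proof.
move=> bA; have := bounded_linear_comb a bA bounded_linear0.
by under eq_fun do rewrite addr0.
Qed.

Lemma ler_opnorm A x : bounded_linear A -> `|x| <= 1 -> `|A x| <= opnorm A.
Proof.
move=> [_ [C hC]] x1; apply: ub_le_sup; last by exists x.
exists `|C| => _ [y /= y1 <-]; apply: le_trans (hC y) _.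
by apply: le_trans (ler_norm _) _; rewrite normrM normr_id ler_piMr.
Qed.

Lemma opnorm_le A M : (forall x, `|x| <= 1 -> `|A x| <= M) -> opnorm A <= M.
Proof.
move=> hM; apply: ge_sup; first by exists `|A 0|, 0; rewrite //= normr0.
by move=> _ [x /= x1 <-]; exact: hM.
Qed.

Lemma opnorm_ge0 A : bounded_linear A -> 0 <= opnorm A.
Proof. by move=> bA; apply: le_trans (ler_opnorm (x := 0) bA _); rewrite ?normr0. Qed.

Lemma ler_opnormM A x : bounded_linear A -> `|A x| <= opnorm A * `|x|.
Proof.
move=> bA; have [->|x0] := eqVneq x 0; first by rewrite (lin0 bA) !normr0 mulr0.
have nx : 0 < `|x| by rewrite normr_gt0.
have := ler_opnorm (x := `|x|^-1 *: x) bA.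
rewrite (linZ bA) !normrZ normfV normr_id mulVf ?gt_eqF // lexx => /(_ isT).
by rewrite mulrC ler_pdivrMr.
Qed.

End BoundedLinear.

Section Dual.
Variables (R : realType) (H : completeNormedModType R).
Implicit Types (A B : H -> H) (f phi : (H -> H) -> R).

Lemma dual_elt0 phi : dual_elt phi -> phi (fun _ => 0) = 0.
Proof.
case=> L _; apply: (@addrI _ (phi (fun _ => 0))); rewrite addr0.
have := L 1 _ _ (@bounded_linear0 R H) (@bounded_linear0 R H).
by under eq_fun do rewrite scaler0 addr0; rewrite mul1r.
Qed.

Lemma dual_eltZ phi a A : dual_elt phi -> bounded_linear A ->
  phi (fun x => a *: A x) = a * phi A.
Proof.
move=> dphi bA; have := (proj1 dphi) a _ _ bA (@bounded_linear0 R H).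
by under eq_fun do rewrite addr0; rewrite dual_elt0 // addr0.
Qed.

Lemma ler_dnorm f M A :
  (forall B, bounded_linear B -> opnorm B <= 1 -> `|f B| <= M) ->
  bounded_linear A -> opnorm A <= 1 -> `|f A| <= dnorm f.
Proof.
move=> hM bA oA; apply: ub_le_sup; last by exists A.
by exists M => _ [B [bB oB] <-]; exact: hM.
Qed.

Lemma dnorm_le f M :
  (forall A, bounded_linear A -> opnorm A <= 1 -> `|f A| <= M) -> dnorm f <= M.
Proof.
move=> hM; apply: ge_sup; last by move=> _ [A [bA oA] <-]; exact: hM.
exists `|f (fun _ => 0)|, (fun _ => 0); split => //; first exact: bounded_linear0.
by apply: opnorm_le => x _; rewrite normr0.
Qed.

Lemma ler_dual_opnorm phi A : dual_elt phi -> bounded_linear A ->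
  `|phi A| <= dnorm phi * opnorm A.
Proof.
move=> dphi bA; have [C hC] := proj2 dphi.
have [oA0|oA_neq0] := eqVneq (opnorm A) 0.
  by have := hC A bA; rewrite oA0 !mulr0.
have oA : 0 < opnorm A by rewrite lt_neqAle eq_sym oA_neq0 opnorm_ge0.
pose B := fun x => (opnorm A)^-1 *: A x.
have bB : bounded_linear B by exact: bounded_linearZ.
have oB : opnorm B <= 1.
  apply: opnorm_le => x x1; rewrite normrZ gtr0_norm ?invr_gt0 //.
  by rewrite ler_pdivrMl // mulr1; exact: ler_opnorm.
have AE : A = fun x => opnorm A *: B x.
  by apply: funext => x; rewrite scalerA mulfV ?scale1r // gt_eqF.
rewrite {1}AE dual_eltZ // normrM gtr0_norm // mulrC ler_pM2r //.
apply: (ler_dnorm (M := `|C|) _ bB oB) => A' bA' oA'.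
apply: le_trans (hC A' bA') _; apply: le_trans (ler_norm _) _.
by rewrite normrM (ger0_norm (opnorm_ge0 bA')) ler_piMr.
Qed.

End Dual.

Section ShrinkingFamily.
Variables (R : realType) (H : completeNormedModType R).
Variable D : R -> set H.
Hypothesis D_neq0 : forall e, 0 < e -> D e !=set0.
Hypothesis D_mono : forall e e', 0 < e -> e <= e' -> D e `<=` D e'.

Definition adherent (z : H) :=
  forall e eps, 0 < e -> 0 < eps -> exists2 x, D e x & `|z - x| < eps.

Let F := filter_from [set e : R | 0 < e] D.

Let F_proper : ProperFilter F.
Proof.
apply: filter_from_proper => [|e /D_neq0 //]; apply: filter_from_filter.
  by exists 1 => /=.
move=> e e' /= e0 e'0; exists (Order.min e e'); first by rewrite /= lt_min e0 e'0.
by move=> x Dx; split; apply: D_mono Dx; rewrite ?lt_min ?e0 ?e'0 ?ge_min ?lexx ?orbT.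
Qed.

Let adherent_cluster z : cluster F z -> adherent z.
Proof.
move=> Fz e eps e0 eps0; have [x [Dx]] := Fz _ _ (ex_intro2 _ _ e e0 (fun _ h => h))
  (nbhsx_ballx z eps eps0).
by rewrite -ball_normE /=; exists x.
Qed.

Lemma compact_adherent (K : set H) :
  compact K -> (forall e, 0 < e -> D e `<=` K) -> exists z, adherent z.
Proof.
move=> cK DK; have FK : F K by exists 1; [exact: ltr01 | apply: DK].
by have [z [_ Fz]] := cK F F_proper FK; exists z; exact: adherent_cluster.
Qed.

Lemma complete_adherent :
  (forall eps, 0 < eps -> exists2 e, 0 < e & forall x y, D e x -> D e y -> `|x - y| < eps) ->
  exists z, adherent z.
Proof.
move=> small; have FP := F_proper; have : cauchy F.
  apply: cauchy_exP => eps /small [e e0 De]; have [x Dx] := D_neq0 e0.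
  by exists x, e => // y Dy; rewrite -ball_normE /=; exact: De.
move=> /cauchy_cvg Fcvg; exists (lim F); apply: adherent_cluster.
by rewrite cluster_cvgE; exists F => //; split.
Qed.

End ShrinkingFamily.

Section HilbertOperators.
Variables (R : realType) (H : completeNormedModType R).
Variables (ip : H -> H -> R) (Hip : is_inner_product ip).
Implicit Types (A B : H -> H) (x y v : H).

Lemma ip_lipschitz A B x y : bounded_linear A -> bounded_linear B ->
  `|x| <= 1 -> `|y| <= 1 ->
  `|ip (A x) (B x) - ip (A y) (B y)| <= 2 * opnorm A * opnorm B * `|x - y|.
Proof.
move=> bA bB x1 y1.
have -> : ip (A x) (B x) - ip (A y) (B y) = ip (A (x - y)) (B x) + ip (A y) (B (x - y)).
  by rewrite (linB bA) (linB bB) (ipBl Hip) (ipBr Hip); ring.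
have oA := opnorm_ge0 bA; have oB := opnorm_ge0 bB.
have c1 : `|ip (A (x - y)) (B x)| <= opnorm A * `|x - y| * opnorm B.
  by apply: le_trans (cauchy_schwarz Hip _ _) _; apply: ler_pM;
    rewrite ?ler_opnormM ?ler_opnorm.
have c2 : `|ip (A y) (B (x - y))| <= opnorm A * (opnorm B * `|x - y|).
  by apply: le_trans (cauchy_schwarz Hip _ _) _; apply: ler_pM;
    rewrite ?ler_opnormM ?ler_opnorm.
by apply: le_trans (ler_normD _ _) _; lra.
Qed.

Lemma norming_close A : bounded_linear A -> 0 < opnorm A ->
  forall eps, 0 < eps -> exists2 e, 0 < e & forall x y, `|x| <= 1 -> `|y| <= 1 ->
    opnorm A - e < `|A x| -> `|A x - A y| < 2 * e -> `|x - y| < eps.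
Proof.
move=> bA NP eps eps0; set N := opnorm A in NP *.
(* the parallelogram law gives N^2 |x - y|^2 < 16 N e *)
pose e := Order.min (N / 2) (eps ^+ 2 * N / 16).
have e0 : 0 < e by rewrite lt_min !divr_gt0 ?mulr_gt0 ?exprn_gt0.
have eN : e <= N / 2 by rewrite ge_min lexx.
have eeps : e <= eps ^+ 2 * N / 16 by rewrite ge_min lexx orbT.
exists e => // x y x1 y1 Ax Axy.
have sum_large : 2 * N - 4 * e < N * `|x + y|.
  have : `|A x + A x| <= `|A x + A y| + `|A x - A y|.
    by have := ler_normD (A x + A y) (A x - A y); rewrite addrACA subrr addr0.
  have -> : `|A x + A x| = 2 * `|A x| by rewrite -mulr2n normrMn mulr_natl.
  have : `|A x + A y| <= N * `|x + y| by rewrite -(linD bA) ler_opnormM.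
  lra.
have para := parallelogram Hip x y.
have x2 : `|x| ^+ 2 <= 1 by rewrite -(expr1n _ 2) ler_sqr ?nnegrE.
have y2 : `|y| ^+ 2 <= 1 by rewrite -(expr1n _ 2) ler_sqr ?nnegrE.
have sqr_sum : (2 * N - 4 * e) ^+ 2 < (N * `|x + y|) ^+ 2.
  by rewrite ltr_sqr ?nnegrE ?mulr_ge0 //; lra.
have : N ^+ 2 * `|x - y| ^+ 2 < N ^+ 2 * eps ^+ 2 by nra.
rewrite ltr_pM2l ?exprn_gt0 // => lt_sqr.
by rewrite -ltr_sqr ?nnegrE // (ltW eps0).
Qed.

Section RankTwo.
Variables (f1 f2 e1 e2 : H).
Hypotheses (f11 : ip f1 f1 = 1) (f22 : ip f2 f2 = 1) (f12 : ip f1 f2 = 0).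
Hypotheses (e11 : ip e1 e1 = 1) (e22 : ip e2 e2 = 1) (e12 : ip e1 e2 = 0).

Definition rank_two v := ip v f1 *: e1 + ip v f2 *: e2.

Lemma norm_rank_two v : `|rank_two v| <= `|v|.
Proof.
rewrite -ler_sqr ?nnegrE // /rank_two (sqr_norm_orthonormal Hip) //.
exact: bessel.
Qed.

Lemma bounded_linear_rank_two : bounded_linear rank_two.
Proof.
split => [a v w|]; last by exists 1 => v; rewrite mul1r norm_rank_two.
by rewrite /rank_two !(ipDl Hip, ipZl Hip) !scalerDl !scalerDr !scalerA addrACA.
Qed.

Lemma opnorm_rank_two : opnorm rank_two <= 1.
Proof. by apply: opnorm_le => v; apply: le_trans (norm_rank_two v). Qed.

End RankTwo.

End HilbertOperators.

Lemma linear_coef_eq0 (R : realFieldType) (b q : R) :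
  (forall s, 0 <= s * b + s ^+ 2 * q) -> b = 0.
Proof.
move=> hq; set c := `|q| + 1; have c0 : 0 < c by rewrite ltr_wpDl.
have := hq (- b / c).
have -> : - b / c * b + (- b / c) ^+ 2 * q = b ^+ 2 * (q - c) / c ^+ 2.
  by field; rewrite gt_eqF.
rewrite pmulr_lge0 ?invr_gt0 ?exprn_gt0 // => h.
have qc : q - c < 0 by rewrite subr_lt0 /c ltr_pwDr // ler_norm.
by apply/eqP; rewrite -sqrf_eq0 eq_le sqr_ge0 andbT; nra.
Qed.

Section CompactOperator.
Variables (R : realType) (H : completeNormedModType R).
Variables (ip : H -> H -> R) (Hip : is_inner_product ip).
Variables (T : H -> H) (HT : compact_operator T).
Hypothesis T_neq0 : exists x, T x != 0.
Implicit Types (A : H -> H) (x y z u v w : H).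

Let bT : bounded_linear T := proj1 HT.
Local Notation N := (opnorm T).

Lemma opnorm_gt0 : 0 < N.
Proof.
have [x Tx0] := T_neq0; rewrite lt_neqAle opnorm_ge0 // andbT.
apply/negP => /eqP N0; have := ler_opnormM x bT; rewrite -N0 mul0r.
by rewrite normr_le0 (negPf Tx0).
Qed.

Let NP := opnorm_gt0.

Lemma MT_adherent z :
  adherent (fun e => [set x | `|x| <= 1 /\ N - e < `|T x|]) z -> MT T z.
Proof.
move=> adz; have z1 : `|z| <= 1.
  apply/ler_addgt0Pr => eps eps0; have [x [x1 _] zx] := adz 1 eps ltr01 eps0.
  by have := ler_normD x (z - x); rewrite addrC subrK; lra.
have Tz : N <= `|T z|.
  apply/ler_addgt0Pr => eps eps0; set d := eps / (2 * N).
  have d0 : 0 < d by rewrite divr_gt0 ?mulr_gt0.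
  have Nd : N * d = eps / 2 by rewrite /d; field; rewrite gt_eqF.
  have [x [_ Tx] zx] := adz (eps / 2) d (divr_gt0 eps0 (ltr0Sn _ 1)) d0.
  have : `|T x| <= `|T z| + N * `|z - x|.
    have -> : T x = T z + T (x - z) by rewrite (linB bT) addrC subrK.
    by rewrite (le_trans (ler_normD _ _)) // lerD2l (distrC z x) ler_opnormM.
  have := ler_wpM2l (ltW NP) (ltW zx).
  lra.
have Tz1 := ler_opnorm bT z1.
split; last by apply/eqP; rewrite eq_le Tz1 Tz.
apply/eqP; rewrite eq_le z1 -(ler_pM2l NP) mulr1.
exact: le_trans Tz (ler_opnormM z bT).
Qed.

Lemma exists_MT_adherent (S : set H) : (forall x, S x -> `|x| <= 1) ->
  (forall e, 0 < e -> exists2 x, S x & N - e < `|T x|) ->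
  exists z, MT T z /\ forall eps, 0 < eps -> exists2 x, S x & `|z - x| < eps.
Proof.
move=> S1 S_norming.
pose E e := T @` [set x | S x /\ N - e < `|T x|].
have [y adEy] : exists y, adherent E y.
  apply: (compact_adherent _ _ (proj2 HT)).
  - by move=> e /S_norming [x Sx Tx]; exists (T x), x.
  - by move=> e e' e0 ee' _ [x [Sx Tx] <-]; exists x => //; split => //; lra.
  - move=> e _ _ [x [Sx _] <-]; apply: subset_closure; exists x => //.
    exact: S1.
pose D e := [set x | S x /\ N - e < `|T x| /\ `|y - T x| < e].
have [z adDz] : exists z, adherent D z.
  apply: complete_adherent.
  - by move=> e e0; have [_ [x [Sx Tx] <-] yTx] := adEy e e e0 e0; exists x.
  - by move=> e e' e0 ee' x [Sx [Tx yTx]]; split => //; split; lra.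
  move=> eps eps0; have [e e0 close] := norming_close Hip bT NP eps0.
  exists e => // x x' [Sx [Tx yTx]] [Sx' [_ yTx']]; apply: close; rewrite ?S1 //.
  have := ler_normD (T x - y) (y - T x'); rewrite addrA subrK (distrC (T x) y); lra.
exists z; split.
  apply: MT_adherent => e eps e0 eps0; have [x [Sx [Tx _]] zx] := adDz e eps e0 eps0.
  by exists x => //; split => //; exact: S1.
by move=> eps eps0; have [x [Sx _] zx] := adDz 1 eps ltr01 eps0; exists x.
Qed.

Lemma exists_MT : exists z, MT T z.
Proof.
have [|z [Mz _]] := @exists_MT_adherent [set x | `|x| <= 1] (fun _ => id).
  move=> e e0; have /sup_gt [|_ [x /= x1 <-] Tx] : N - e < N by rewrite ltrBlDr ltrDl.
    by exists `|T 0|, 0; rewrite //= normr0.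
  by exists x.
by exists z.
Qed.

Lemma MT_ip x w : MT T x -> ip (T x) (T w) = N ^+ 2 * ip x w.
Proof.
move=> [x1 Tx]; have sqr_le v : `|T v| ^+ 2 <= N ^+ 2 * `|v| ^+ 2.
  by rewrite -exprMn ler_sqr ?nnegrE ?mulr_ge0 ?opnorm_ge0 ?ler_opnormM.
(* s |-> N^2 |x + s w|^2 - |T (x + s w)|^2 is nonnegative and vanishes at 0 *)
suff : 2 * (N ^+ 2 * ip x w - ip (T x) (T w)) = 0 by lra.
apply: (linear_coef_eq0 (q := N ^+ 2 * `|w| ^+ 2 - `|T w| ^+ 2)) => s.
have := sqr_le (x + s *: w); rewrite (linD bT) (linZ bT) !(sqr_normD1Z Hip) x1 Tx.
lra.
Qed.

Lemma MT_comb (a b : R) x y : MT T x -> MT T y -> `|a *: x + b *: y| = 1 ->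
  MT T (a *: x + b *: y).
Proof.
move=> [x1 Tx] [y1 Ty] n1; split; first exact: n1.
have E : `|T (a *: x + b *: y)| ^+ 2 = N ^+ 2 * `|a *: x + b *: y| ^+ 2.
  by rewrite (linD bT) !(linZ bT) !(sqr_normDZ Hip) MT_ip // x1 y1 Tx Ty; ring.
by apply/eqP; rewrite -(eqrXn2 (ltn0Sn 1)) ?opnorm_ge0 // E n1 expr1n mulr1.
Qed.

Lemma MT_orthogonal x y : MT T x -> MT T y -> y <> x -> y <> - x ->
  exists2 u, MT T u & ip x u = 0.
Proof.
move=> Mx My yx ynx; have [x1 _] := Mx; have [y1 _] := My.
set c := ip y x; set w := y - c *: x.
have w0 : w != 0.
  apply/eqP => /eqP; rewrite subr_eq0 => /eqP yE.
  have : `|c| = 1 by rewrite -y1 yE normrZ x1 mulr1.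
  by case: (ger0P c) => _ c1; [apply: yx | apply: ynx];
    rewrite yE ?c1 ?scale1r // -[c]opprK c1 scaleN1r.
set k := `|w|^-1.
have wE : k *: y + (- (k * c)) *: x = k *: w by rewrite scalerBr scalerA scaleNr.
have u1 : `|k *: y + (- (k * c)) *: x| = 1.
  by rewrite wE normrZ normfV normr_id mulVf ?normr_eq0.
exists (k *: y + (- (k * c)) *: x); first exact: MT_comb.
by rewrite (ipDr Hip) !(ipZr Hip) (ipC Hip x y) -/c (ipxx Hip) x1; ring.
Qed.

Definition norming_functional x (A : H -> H) := ip (A x) (T x) / N.

Lemma norming_functional_le x A : MT T x -> bounded_linear A ->
  `|norming_functional x A| <= opnorm A.
Proof.
move=> [x1 Tx] bA; rewrite /norming_functional normrM normfV (gtr0_norm NP).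
rewrite ler_pdivrMr //; apply: le_trans (cauchy_schwarz Hip _ _) _.
by rewrite Tx ler_wpM2r ?opnorm_ge0 // ler_opnorm ?x1.
Qed.

Lemma Jset_norming_functional x : MT T x -> Jset T (norming_functional x).
Proof.
move=> Mx; have Txx : ip (T x) (T x) = N ^+ 2 by rewrite (ipxx Hip) (proj2 Mx).
split; [split|split].
- by move=> a A B bA bB; rewrite /norming_functional (ipDl Hip) (ipZl Hip) mulrDl mulrA.
- by exists 1 => A bA; rewrite mul1r norming_functional_le.
- apply/eqP; rewrite eq_le; apply/andP; split.
    by apply: dnorm_le => A bA oA; apply: le_trans oA; exact: norming_functional_le.
  have bTN : bounded_linear (fun v => N^-1 *: T v) by exact: bounded_linearZ.
  have oTN : opnorm (fun v => N^-1 *: T v) <= 1.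
    apply: opnorm_le => v v1; rewrite normrZ normfV (gtr0_norm NP) ler_pdivrMl // mulr1.
    exact: ler_opnorm.
  have := ler_dnorm (fun A bA oA => le_trans (norming_functional_le Mx bA) oA) bTN oTN.
  suff -> : norming_functional x (fun v => N^-1 *: T v) = 1 by rewrite normr1.
  by rewrite /norming_functional (ipZl Hip) Txx; field; rewrite gt_eqF.
- by rewrite /norming_functional Txx; field; rewrite gt_eqF.
Qed.

Lemma eps_smooth_ge2 x u eps : MT T x -> MT T u -> ip x u = 0 ->
  eps_smooth eps T -> 2 <= eps.
Proof.
move=> Mx Mu xu smooth_eps; have [x1 _] := Mx; have [u1 _] := Mu.
have unit_ip v : `|v| = 1 -> ip v v = 1 by move=> v1; rewrite (ipxx Hip) v1 expr1n.
set e1 := N^-1 *: T x; set e2 := (- N^-1) *: T u.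
have N2 : N^-1 * N^-1 * N ^+ 2 = 1 by field; rewrite gt_eqF.
have e11 : ip e1 e1 = 1.
  by rewrite (ipZl Hip) (ipZr Hip) MT_ip // unit_ip // mulr1 mulrA N2.
have e22 : ip e2 e2 = 1.
  by rewrite (ipZl Hip) (ipZr Hip) MT_ip // unit_ip // mulr1 mulrA mulrNN N2.
have e12 : ip e1 e2 = 0 by rewrite (ipZl Hip) (ipZr Hip) MT_ip // xu !mulr0.
pose A := rank_two ip x u e1 e2.
have x11 := unit_ip x x1; have u11 := unit_ip u u1.
have bA : bounded_linear A := bounded_linear_rank_two Hip x11 u11 xu e11 e22 e12.
have oA : opnorm A <= 1 := opnorm_rank_two Hip x11 u11 xu e11 e22 e12.
have nf_e v s : MT T v -> ip (s *: T v) (T v) / N = s * N.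
  by move=> Mv; rewrite (ipZl Hip) MT_ip // unit_ip ?(proj1 Mv) // mulr1; field; rewrite gt_eqF.
have nfx : norming_functional x A = 1.
  rewrite /norming_functional /A /rank_two unit_ip // xu scale0r addr0 scale1r.
  by rewrite nf_e // mulVf ?gt_eqF.
have nfu : norming_functional u A = -1.
  rewrite /norming_functional /A /rank_two unit_ip // (ipC Hip u x) xu scale0r add0r scale1r.
  by rewrite nf_e // mulNr mulVf ?gt_eqF.
apply: le_trans (smooth_eps _ _ (Jset_norming_functional Mx) (Jset_norming_functional Mu)).
have := @ler_dnorm _ _ (fun B => norming_functional x B - norming_functional u B) 2 A.
rewrite /= nfx nfu opprK (ger0_norm (ler0n _ 2)); apply => // B bB oB.
apply: le_trans (ler_normB _ _) _.
by have := norming_functional_le Mx bB; have := norming_functional_le Mu bB; lra.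
Qed.

Lemma MT_pm_near x0 : MT T = [set x0; - x0] -> forall d, 0 < d ->
  exists2 e, 0 < e & forall x, `|x| <= 1 -> N - e < `|T x| ->
    `|x - x0| < d \/ `|x + x0| < d.
Proof.
move=> MTE d d0; apply: contrapT => far.
pose S := [set x | `|x| <= 1 /\ d <= `|x - x0| /\ d <= `|x + x0|].
have [|z [Mz adz]] := @exists_MT_adherent S (fun x Sx => proj1 Sx).
  move=> e e0; apply: contrapT => noS; apply: far; exists e => // x x1 Tx.
  have [|dx] := ltP `|x - x0| d; first by left.
  have [|dx'] := ltP `|x + x0| d; first by right.
  by exfalso; apply: noS; exists x.
have [x [_ [dx dx']] zx] := adz d d0.
rewrite MTE in Mz; case: Mz => zE; move: zx; rewrite zE.
  by rewrite distrC ltNge dx.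
by rewrite -opprD normrN addrC ltNge dx'.
Qed.

Lemma ip_le_near_pm A x0 d v : bounded_linear A -> `|x0| <= 1 -> `|v| <= 1 ->
  `|v - x0| < d \/ `|v + x0| < d ->
  ip (A v) (T v) <= ip (A x0) (T x0) + 2 * opnorm A * N * d.
Proof.
move=> bA x01 v1 near; have c0 : 0 <= 2 * opnorm A * N by rewrite !mulr_ge0 ?opnorm_ge0.
have close y : `|y| <= 1 -> ip (A y) (T y) = ip (A x0) (T x0) -> `|v - y| < d ->
    ip (A v) (T v) <= ip (A x0) (T x0) + 2 * opnorm A * N * d.
  move=> y1 <- vy; have := ip_lipschitz Hip bA bT v1 y1.
  have := ler_wpM2l c0 (ltW vy).
  by have := ler_norm (ip (A v) (T v) - ip (A y) (T y)); lra.
case: near => [vx0|vx0]; first exact: (close x0 x01 erefl vx0).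
apply: (close (- x0)); rewrite ?normrN ?opprK //.
by rewrite (linN bA) (linN bT) (ipNl Hip) (ipNr Hip) opprK.
Qed.

(* Near M_T the cross term is controlled by phi; away from it, |y| <= N - e leaves
   room of order e. *)
Lemma norm_perturb_le (w y : H) (K t phi g e : R) :
  `|w| <= K -> `|y| <= N -> - K <= phi -> 0 < t -> t <= 1 -> 0 < g -> 0 < e ->
  t * K <= N -> t * K ^+ 2 <= N * g -> t * (4 * K * N + K ^+ 2) <= N * e ->
  (N - e < `|y| -> ip w y <= N * phi + N * g / 2) ->
  `|t *: w + y| <= N + t * (phi + g).
Proof.
move=> wK yN Kphi t0 t1 g0 e0 tK tg te near.
have K0 : 0 <= K := le_trans (normr_ge0 w) wK.
have tphi := ler_wpM2l (ltW t0) Kphi.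
have rhs0 : 0 <= N + t * (phi + g) by have := mulr_ge0 (ltW t0) (ltW g0); lra.
rewrite -ler_sqr ?nnegrE //.
have := sqr_normDZ Hip t 1 w y; rewrite scale1r => ->.
have rhs2 : N ^+ 2 + 2 * t * (N * phi) + 2 * t * N * g <= (N + t * (phi + g)) ^+ 2.
  by have := sqr_ge0 (t * (phi + g)); lra.
have sqw : t ^+ 2 * `|w| ^+ 2 <= t ^+ 2 * K ^+ 2.
  by rewrite ler_wpM2l ?sqr_ge0 // ler_sqr ?nnegrE.
have [y_near|y_far] := ltP (N - e) `|y|.
  have := ler_wpM2l (ltW t0) (near y_near).
  have : `|y| ^+ 2 <= N ^+ 2 by rewrite ler_sqr ?nnegrE ?opnorm_ge0.
  have := ler_wpM2l (ltW t0) tg.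
  lra.
have eN : e <= N by have := normr_ge0 y; lra.
have : `|y| ^+ 2 <= (N - e) ^+ 2 by rewrite ler_sqr ?nnegrE ?subr_ge0.
have := ler_wpM2r (ltW e0) eN.
have wy : ip w y <= K * N.
  apply: le_trans (ler_norm _) _; apply: le_trans (cauchy_schwarz Hip _ _) _.
  by rewrite ler_pM.
have := ler_wpM2l (ltW t0) wy.
have := ler_wpM2r (mulr_ge0 (ltW t0) (sqr_ge0 K)) t1.
have := ler_wpM2l (ltW NP) tphi.
have := mulr_ge0 (mulr_ge0 (ltW t0) (ltW NP)) (ltW g0).
lra.
Qed.

Lemma opnorm_perturb_le x0 A g : MT T = [set x0; - x0] -> bounded_linear A -> 0 < g ->
  exists2 t, 0 < t &
    opnorm (fun v => t *: A v + T v) <= N + t * (norming_functional x0 A + g).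
Proof.
move=> MTE bA g0; have Mx0 : MT T x0 by rewrite MTE; left.
have oA := opnorm_ge0 bA; set K := opnorm A + 1; have KE : K = opnorm A + 1 := erefl.
have K0 : 0 < K by rewrite ltr_wpDl.
set phi := norming_functional x0 A.
have phiK : `|phi| <= K by apply: le_trans (norming_functional_le Mx0 bA) _; lra.
have d0 : 0 < g / (4 * K) by rewrite divr_gt0 ?mulr_gt0.
have [e e0 near] := MT_pm_near MTE d0.
have KN0 : 0 < 4 * K * N + K ^+ 2 by rewrite addr_gt0 ?mulr_gt0 ?exprn_gt0.
pose t := Order.min (Order.min 1 (N / K))
  (Order.min (N * g / K ^+ 2) (N * e / (4 * K * N + K ^+ 2))).
have t0 : 0 < t by rewrite !lt_min ltr01 !divr_gt0 ?mulr_gt0 ?exprn_gt0.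
exists t => //; apply: opnorm_le => v v1; move: phiK; rewrite ler_norml => /andP [Kphi _].
have x01 : `|x0| <= 1 by rewrite (proj1 Mx0).
apply: norm_perturb_le (ler_opnorm bT v1) Kphi t0 _ g0 e0 _ _ _ _.
- by apply: le_trans (ler_opnorm bA v1) _; lra.
- by rewrite !ge_min lexx.
- by rewrite -ler_pdivlMr // !ge_min lexx !orbT.
- by rewrite -ler_pdivlMr ?exprn_gt0 // !ge_min lexx !orbT.
- by rewrite -ler_pdivlMr // !ge_min lexx !orbT.
move=> Tv; apply: le_trans (ip_le_near_pm bA x01 v1 (near v v1 Tv)) _.
have -> : ip (A x0) (T x0) = N * phi by rewrite /phi /norming_functional; field; rewrite gt_eqF.
have -> : N * g / 2 = 2 * K * N * (g / (4 * K)) by field; rewrite gt_eqF.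
by rewrite lerD2l ler_wpM2r ?(ltW d0) // ler_wpM2r ?(ltW NP) // ler_wpM2l //; lra.
Qed.

Lemma Jset_MT_pm x0 psi : MT T = [set x0; - x0] -> Jset T psi ->
  dual_eq psi (norming_functional x0).
Proof.
move=> MTE [dpsi [npsi psiT]].
have le_nf A : bounded_linear A -> psi A <= norming_functional x0 A.
  move=> bA; apply/ler_addgt0Pr => g g0.
  have [t t0 Tt] := opnorm_perturb_le MTE bA g0.
  have bTt := bounded_linear_comb t bA bT.
  have := le_trans (ler_norm _) (ler_dual_opnorm dpsi bTt).
  rewrite npsi mul1r (proj1 dpsi) // psiT => /le_trans /(_ Tt).
  by rewrite addrC lerD2l ler_pM2l.
move=> A bA; apply/eqP; rewrite eq_le le_nf //=.
have := le_nf _ (bounded_linearZ (-1) bA); rewrite dual_eltZ //.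
by rewrite /norming_functional (ipZl Hip) !mulN1r mulNr lerN2.
Qed.

End CompactOperator.

Unset Implicit Arguments.

Theorem theorem3p2 (R : realType) (H : completeNormedModType R)
  (ip : H -> H -> R) (Hip : is_inner_product ip)
  (T : H -> H) (HT : compact_operator T) (HT0 : exists x, T x != 0) :
  [<-> (exists eps : R, 0 <= eps /\ eps < 2 /\ eps_smooth eps T);
       (exists x0 : H, `|x0| = 1 /\ MT T = [set x0; - x0]);
       smooth T].
Proof.
tfae.
- move=> [eps [_ [eps2 smooth_eps]]]; have [z Mz] := exists_MT Hip HT HT0.
  exists z; split; first exact: (proj1 Mz).
  apply/seteqP; split => [y My|_ [->|->]] //.
    have [->|yz] := pselect (y = z); first by left.
    have [->|ynz] := pselect (y = - z); first by right.
    have [u Mu zu] := MT_orthogonal Hip HT Mz My yz ynz.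
    by have := eps_smooth_ge2 Hip HT HT0 Mz Mu zu smooth_eps; rewrite leNgt eps2.
  by case: Mz => z1 Tz; split; rewrite ?normrN // (linN (proj1 HT)) normrN.
- move=> [x0 [_ MTE]]; have Mx0 : MT T x0 by rewrite MTE; left.
  exists (norming_functional ip T x0); split.
    exact (Jset_norming_functional Hip HT HT0 Mx0).
  by move=> psi; exact (Jset_MT_pm Hip HT HT0 MTE).
- move=> [phi [_ uniq_phi]]; exists 0; split; first exact: lexx.
  split; first exact: ltr0Sn.
  move=> p q Jp Jq; apply: dnorm_le => A bA _.
  by rewrite (uniq_phi p Jp A bA) (uniq_phi q Jq A bA) subrr normr0.
Qed.
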